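(* In the model of the context, suppose $\tau+\rho(\gamma,\infty)\tau-\rho(\gamma,\infty)>0$. If the primary protection constraint $\Pr[\mathsf{SIR}_1<\gamma]\le\tau$ holds, then $\beta\ge\beta_{\min}$, where $$\beta_{\min}=\left(\frac{P_1^{2/\alpha}\rho_0(\gamma,\infty)(1-\tau)}{\pi d^2\left(\int_0^\infty\frac{du}{1+u^{\alpha/2}}\right)\lambda_1P_2^{2/\alpha}\left[\tau+\rho(\gamma,\infty)\tau-\rho(\gamma,\infty)\right]}\right)^{\alpha/2}.$$
   Context: Parameters: primary TX density $\lambda_1$, primary and secondary transmit powers $P_1,P_2$, secondary pair distance $d$, path-loss exponent $\alpha>2$, primary decoding threshold $\gamma>0$, tolerated primary outage $\tau\in(0,1)$, secondary decoding threshold $\beta>0$. Define $\rho_0(a,t)=a^{2/\alpha}\int_0^t\frac{du}{1+u^{\alpha/2}}$ and $\rho(a,t)=a^{2/\alpha}\int_{a^{-2/\alpha}}^{t}\frac{du}{1+u^{\alpha/2}}$. In the model, the active secondary TXs have density $\frac{1}{\pi d^2\rho_0(\beta,\infty)}$, and the SIR outage probability of a typical primary user is $$\Pr[\mathsf{SIR}_1<\gamma]=1-\frac{\lambda_1P_2^{2/\alpha}}{\frac{\rho_0(\gamma,\infty)P_1^{2/\alpha}}{\pi d^2\rho_0(\beta,\infty)}+\lambda_1P_2^{2/\alpha}\left(\rho(\gamma,\infty)+1\right)}.$$ *)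

From HB Require Import structures.
From mathcomp Require Import all_boot all_order all_algebra.
From mathcomp Require Import all_classical all_reals all_analysis.
Set Implicit Arguments. Unset Strict Implicit. Unset Printing Implicit Defensive.
Import Order.TTheory GRing.Theory Num.Theory.
Import numFieldNormedType.Exports.
Local Open Scope classical_set_scope.
Local Open Scope ring_scope.

Section Defs.
Variable R : realType.

Definition kern (alpha : R) (u : R) : R := (1 + u `^ (alpha / 2))^-1.

Definition tail_int (alpha lo : R) : R :=
  Rintegral lebesgue_measure `[lo, +oo[ (kern alpha).

Definition rho0_inf (alpha a : R) : R := a `^ (2 / alpha) * tail_int alpha 0.

Definition rho_inf (alpha a : R) : R :=
  a `^ (2 / alpha) * tail_int alpha (a `^ (- (2 / alpha))).

Definition sec_density (alpha beta d : R) : R :=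
  (pi * d ^+ 2 * rho0_inf alpha beta)^-1.

Definition primary_outage (lambda1 P1 P2 d alpha gamma beta : R) : R :=
  1 - lambda1 * P2 `^ (2 / alpha) /
      (rho0_inf alpha gamma * P1 `^ (2 / alpha) * sec_density alpha beta d
       + lambda1 * P2 `^ (2 / alpha) * (rho_inf alpha gamma + 1)).

Definition beta_min (lambda1 P1 P2 d alpha gamma tau : R) : R :=
  (P1 `^ (2 / alpha) * rho0_inf alpha gamma * (1 - tau) /
   (pi * d ^+ 2 * tail_int alpha 0 * lambda1 * P2 `^ (2 / alpha) *
    (tau + rho_inf alpha gamma * tau - rho_inf alpha gamma))) `^ (alpha / 2).

End Defs.

From HB Require Import structures.
From mathcomp Require Import all_boot all_order all_algebra.
From mathcomp Require Import all_classical all_reals all_analysis.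
From mathcomp Require Import ring lra.
Import Order.TTheory GRing.Theory Num.Theory.
Local Open Scope ring_scope.

(* Write x = beta^(2/alpha) and I = tail_int alpha 0.  The secondary
   interference term of the outage formula is rho_0(gamma, oo) P1^(2/alpha)
   / (pi d^2 x I) with rho_0(gamma, oo) = gamma^(2/alpha) I, so I cancels and
   the constraint reads (const)/x <= lambda1 P2^(2/alpha) (tau + rho tau - rho).
   The last factor being positive, this is the lower bound
   x >= beta_min^(2/alpha).  If I = 0 (which is also the value Rintegral
   assigns to a non-integrable function), beta_min = 0^(alpha/2) = 0. *)

Section RealField.
Local Set Implicit Arguments.
Local Unset Strict Implicit.
Variable R : realFieldType.
Implicit Types a c r t u m y C : R.

Lemma outage_le_bound a c r t :
  0 <= a -> 0 < c -> 0 <= r ->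
  1 - c / (a + c * (r + 1)) <= t -> (1 - t) * a <= c * (t + r * t - r).
Proof.
move=> a_ge0 c_gt0 r_ge0 hout.
have D_gt0 : 0 < a + c * (r + 1) by rewrite ltr_wpDl // mulr_gt0 // ltr_wpDl.
have : (1 - t) * (a + c * (r + 1)) <= c.
  by rewrite -ler_pdivlMr // lerBlDr addrC -lerBlDr.
lra.
Qed.

Lemma ler_pdiv_swap u m y C :
  0 < m -> 0 < y -> 0 < C -> u / (m * y) <= C -> u / (m * C) <= y.
Proof.
move=> m_gt0 y_gt0 C_gt0.
by rewrite !ler_pdivrMr ?mulr_gt0 // mulrCA [y * _]mulrCA [C * y]mulrC.
Qed.

End RealField.

Section RealType.
Local Set Implicit Arguments.
Local Unset Strict Implicit.
Variable R : realType.
Implicit Types d alpha gamma tau beta e x y lo a : R.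

Lemma powR_le_of_le_powRV e x y :
  0 < e -> 0 <= x -> 0 <= y -> x <= y `^ e^-1 -> x `^ e <= y.
Proof.
move=> e_gt0 x_ge0 y_ge0 xy.
apply: le_trans (ge0_ler_powR (ltW e_gt0) _ _ xy) _; rewrite ?nnegrE ?powR_ge0 //.
by rewrite -powRrM mulVf ?gt_eqF // powRr1.
Qed.

Lemma tail_int_ge0 alpha lo : 0 <= tail_int alpha lo.
Proof.
rewrite /tail_int; apply: Rintegral_ge0 => x _.
by rewrite /kern invr_ge0 addr_ge0 // powR_ge0.
Qed.

Lemma rho_inf_ge0 alpha a : 0 <= rho_inf alpha a.
Proof. by rewrite /rho_inf mulr_ge0 ?powR_ge0 ?tail_int_ge0. Qed.

Lemma rho0_inf_ge0 alpha a : 0 <= rho0_inf alpha a.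
Proof. by rewrite /rho0_inf mulr_ge0 ?powR_ge0 ?tail_int_ge0. Qed.

Lemma sec_density_ge0 alpha beta d : 0 <= sec_density alpha beta d.
Proof.
by rewrite /sec_density invr_ge0 mulr_ge0 ?rho0_inf_ge0 // mulr_ge0 ?sqr_ge0 ?pi_ge0.
Qed.

Lemma primary_outage_le (lambda1 P1 P2 : R) d alpha gamma tau beta :
  0 < lambda1 -> 0 < P2 ->
  primary_outage lambda1 P1 P2 d alpha gamma beta <= tau ->
  (1 - tau) * (rho0_inf alpha gamma * P1 `^ (2 / alpha) * sec_density alpha beta d)
    <= lambda1 * P2 `^ (2 / alpha)
       * (tau + rho_inf alpha gamma * tau - rho_inf alpha gamma).
Proof.
move=> l_gt0 P2_gt0; apply: outage_le_bound; last exact: rho_inf_ge0.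
  by rewrite mulr_ge0 ?sec_density_ge0 // mulr_ge0 ?rho0_inf_ge0 ?powR_ge0.
by rewrite mulr_gt0 ?powR_gt0.
Qed.

End RealType.

Theorem lemma2 (R : realType) (lambda1 P1 P2 d alpha gamma tau beta : R) :
  0 < lambda1 -> 0 < P1 -> 0 < P2 -> 0 < d -> 2 < alpha ->
  0 < gamma -> 0 < tau -> tau < 1 -> 0 < beta ->
  0 < tau + rho_inf alpha gamma * tau - rho_inf alpha gamma ->
  primary_outage lambda1 P1 P2 d alpha gamma beta <= tau ->
  beta_min lambda1 P1 P2 d alpha gamma tau <= beta.
Proof.
move=> l_gt0 P1_gt0 P2_gt0 d_gt0 alpha_gt2 _ _ tau_lt1 beta_gt0 K_gt0 hout.
have half_alpha_gt0 : 0 < alpha / 2 by rewrite divr_gt0 //; lra.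
have [I0|I_neq0] := eqVneq (tail_int alpha 0) 0.
  by rewrite /beta_min /rho0_inf I0 !(mulr0, mul0r) powR0 ?gt_eqF // ltW.
have I_gt0 : 0 < tail_int alpha 0 by rewrite lt_def I_neq0 tail_int_ge0.
have := primary_outage_le l_gt0 P2_gt0 hout.
rewrite /beta_min /sec_density /rho0_inf.
set I := tail_int alpha 0; set K := _ + _ - _.
set b := beta `^ (2 / alpha); set C := lambda1 * _ * K => bound.
have m_gt0 : 0 < pi * d ^+ 2 * I by rewrite !mulr_gt0 ?pi_gt0 ?exprn_gt0.
have C_gt0 : 0 < C by rewrite !mulr_gt0 ?powR_gt0.
rewrite (_ : pi * d ^+ 2 * I * lambda1 * _ * K = pi * d ^+ 2 * I * C); last first.
  by rewrite /C !mulrA.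
apply: powR_le_of_le_powRV; rewrite ?invf_div -/b ?(ltW beta_gt0) //.
  apply: divr_ge0; last exact/ltW/mulr_gt0.
  by rewrite mulr_ge0 ?subr_ge0 ?(ltW tau_lt1) // !mulr_ge0 ?powR_ge0 ?(ltW I_gt0).
apply: (ler_pdiv_swap m_gt0); rewrite ?powR_gt0 //; apply: le_trans bound.
rewrite le_eqVlt; apply/predU1P; left.
by rewrite [b * I]mulrC mulrA [RHS]mulrA; congr (_ / _); ring.
Qed.
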